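(* Let $z_1(x)=2e^{1-\frac{1}{1-(x/\pi)^2}}-1$ on $[-\pi,\pi]$ (with $z_1$ and all its derivatives extended continuously to $x=\pm\pi$), and let $\epsilon=\frac1{128}$. Then for each $k\in\{0,1,2,3,4,5\}$: for every $x\in[-\pi,-\pi+\epsilon]$, $\partial_x^k z_1(x)$ lies between $\partial_x^k z_1(-\pi)$ and $\partial_x^k z_1(-\pi+\epsilon)$ (in their convex hull), and for every $x\in[\pi-\epsilon,\pi]$, $\partial_x^k z_1(x)$ lies between $\partial_x^k z_1(\pi-\epsilon)$ and $\partial_x^k z_1(\pi)$. *)

From Stdlib Require Import Reals Lra.
From Coquelicot Require Import Coquelicot.
Open Scope R_scope.

(* The extension is C^infinity on R
   (a standard bump function), and its derivatives at +-pi equal the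
   continuous extensions (all 0) of the derivatives from inside. *)
Definition z1 (x : R) : R :=
  if Rlt_dec (Rabs x) PI then 2 * exp (1 - 1 / (1 - (x / PI) ^ 2)) - 1
  else -1.

Definition eps : R := 1 / 128.

Definition between (a b v : R) : Prop := Rmin a b <= v <= Rmax a b.

From Stdlib Require Import Reals Lra Lia Factorial.
From Coquelicot Require Import Coquelicot.
Open Scope R_scope.

(* On (-PI, PI), with q x = 1 - (x/PI)^2 ([zq]), the k-th derivative of z1 is
   2 exp(1 - 1/q x) P_k(x/PI) / (PI^k q(x)^(2k)) (minus 1 when k = 0) for
   polynomials P_k ([zpoly k]) obeying P_(k+1) = P_k' (1-u^2)^2 + (4k(1-u^2) - 2) u P_k;
   outside [-PI, PI] z1 is constant, and at +-PI every derivative vanishes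
   because exp(-1/q) decays faster than any power of q.  Expanding P_k around
   u = -1 shows P_k > 0 on (-1, -1 + 1/384] for k <= 6, and since
   eps/PI < 1/384, both z1^(k) and z1^(k+1) keep a sign on [-PI, -PI + eps];
   hence z1^(k) is monotone there and its values lie between those at the
   endpoints.  The parity P_k(-u) = (-1)^k P_k(u) transfers this to
   [PI - eps, PI]. *)

Definition zpoly (k : nat) (u : R) : R :=
  match k with
  | 0 => 1
  | 1 => -2 * u
  | 2 => -2 + 6 * u^4
  | 3 => -12 * u + 40 * u^3 - 12 * u^5 - 24 * u^7
  | 4 => -12 + 24 * u^2 + 232 * u^4 - 528 * u^6 + 180 * u^8 + 120 * u^10
  | 5 => -120 * u + 1360 * u^3 - 2112 * u^5 - 2400 * u^7 + 6120 * u^9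
         - 2160 * u^11 - 720 * u^13
  | 6 => -120 + 2160 * u^2 + 8040 * u^4 - 56816 * u^6 + 77160 * u^8
         + 7440 * u^10 - 68040 * u^12 + 25200 * u^14 + 5040 * u^16
  | _ => 0
  end.

Definition zpoly_deriv (k : nat) (u : R) : R :=
  match k with
  | 0 => 0
  | 1 => -2
  | 2 => 24 * u^3
  | 3 => -12 + 120 * u^2 - 60 * u^4 - 168 * u^6
  | 4 => 48 * u + 928 * u^3 - 3168 * u^5 + 1440 * u^7 + 1200 * u^9
  | 5 => -120 + 4080 * u^2 - 10560 * u^4 - 16800 * u^6 + 55080 * u^8
         - 23760 * u^10 - 9360 * u^12
  | 6 => 4320 * u + 32160 * u^3 - 340896 * u^5 + 617280 * u^7 + 74400 * u^9
         - 816480 * u^11 + 352800 * u^13 + 80640 * u^15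
  | _ => 0
  end.

Definition zpoly_shifted (k : nat) (v : R) : R :=
  match k with
  | 0 => 1
  | 1 => 2 - 2 * v
  | 2 => 4 - 24 * v + 36 * v^2 - 24 * v^3 + 6 * v^4
  | 3 => 8 - 120 * v + 504 * v^2 - 920 * v^3 + 900 * v^4 - 516 * v^5
         + 168 * v^6 - 24 * v^7
  | 4 => 16 - 448 * v + 3936 * v^2 - 14848 * v^3 + 30112 * v^4 - 37152 * v^5
         + 29712 * v^6 - 15840 * v^7 + 5580 * v^8 - 1200 * v^9 + 120 * v^10
  | 5 => 32 - 1440 * v + 22080 * v^2 - 152000 * v^3 + 551040 * v^4
         - 1205952 * v^5 + 1736160 * v^6 - 1730400 * v^7 + 1227960 * v^8
         - 627480 * v^9 + 229680 * v^10 - 58320 * v^11 + 9360 * v^12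
         - 720 * v^13
  | 6 => 64 - 4224 * v + 100800 * v^2 - 1136000 * v^3 + 6837600 * v^4
         - 24432384 * v^5 + 56833024 * v^6 - 91766400 * v^7
         + 107272560 * v^8 - 93213600 * v^9 + 61102320 * v^10
         - 30371040 * v^11 + 11397960 * v^12 - 3175200 * v^13
         + 630000 * v^14 - 80640 * v^15 + 5040 * v^16
  | _ => 0
  end.

Lemma zpoly_is_derive (k : nat) (u : R) : is_derive (zpoly k) u (zpoly_deriv k u).
Proof.
  change (is_derive (fun u => zpoly k u) u (zpoly_deriv k u)).
  destruct k as [|[|[|[|[|[|[|k]]]]]]]; unfold zpoly, zpoly_deriv;
    auto_derive; auto; ring.
Qed.

Lemma zpoly_succ (k : nat) (u : R) : (k <= 5)%nat ->
  zpoly (S k) u =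
  zpoly_deriv k u * (1 - u^2)^2 + (4 * INR k * (1 - u^2) - 2) * u * zpoly k u.
Proof.
  intros Hk; destruct k as [|[|[|[|[|[|k]]]]]]; try lia;
    simpl zpoly; simpl zpoly_deriv; simpl INR; ring.
Qed.

Lemma zpoly_opp (k : nat) (u : R) : zpoly k (- u) = (-1)^k * zpoly k u.
Proof. destruct k as [|[|[|[|[|[|[|k]]]]]]]; simpl; ring. Qed.

Lemma zpoly_shift (k : nat) (v : R) : zpoly k (v - 1) = zpoly_shifted k v.
Proof. destruct k as [|[|[|[|[|[|[|k]]]]]]]; simpl; ring. Qed.

Lemma pow_S_bounds (v h : R) :
  0 <= v <= h -> forall n : nat, 0 <= v ^ S n <= h ^ n * v.
Proof.
  intros Hv n; split; [apply pow_le; lra|].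
  rewrite <- tech_pow_Rmult, Rmult_comm.
  apply Rmult_le_compat_r; [lra|apply pow_incr; lra].
Qed.

Ltac pose_pow_bounds H n :=
  lazymatch n with
  | O => idtac
  | S ?m => pose proof (H m); pose_pow_bounds H m
  end.

Lemma zpoly_shifted_pos (k : nat) (v : R) :
  (k <= 6)%nat -> 0 < v <= / 384 -> 0 < zpoly_shifted k v.
Proof.
  intros Hk Hv.
  pose_pow_bounds (pow_S_bounds v (/ 384) ltac:(lra)) 16%nat.
  destruct k as [|[|[|[|[|[|[|k]]]]]]]; try lia; simpl zpoly_shifted; lra.
Qed.

Lemma pow_bounds_unit (u : R) : -1 <= u <= 1 -> forall n : nat, -1 <= u ^ n <= 1.
Proof.
  intros Hu n; apply Rabs_le_between.
  rewrite <- RPow_abs, <- (pow1 n).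
  apply pow_incr; split; [apply Rabs_pos|apply Rabs_le; lra].
Qed.

Lemma zpoly_bound (k : nat) (u : R) : -1 <= u <= 1 -> Rabs (zpoly k u) <= 300000.
Proof.
  intros Hu; apply Rabs_le.
  pose_pow_bounds (pow_bounds_unit u Hu) 17%nat.
  destruct k as [|[|[|[|[|[|[|k]]]]]]]; simpl zpoly; lra.
Qed.

Definition zq (x : R) : R := 1 - (x / PI) ^ 2.

Definition z1_deriv_in (k : nat) (x : R) : R :=
  2 * exp (1 - 1 / zq x) * zpoly k (x / PI) / (PI ^ k * zq x ^ (2 * k)).

Lemma zq_pos (x : R) : Rabs x < PI -> 0 < zq x.
Proof.
  intros Hx; pose proof PI_RGT_0; apply Rabs_def2 in Hx.
  assert (E : zq x * PI ^ 2 = (PI - x) * (PI + x)) by (unfold zq; field; lra).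
  nra.
Qed.

Lemma zq_le_dist (y x0 : R) : Rabs y < PI -> x0 = PI \/ x0 = - PI ->
  zq y <= Rabs (y - x0).
Proof.
  intros Hy Hx0; pose proof PI2_3_2; apply Rabs_def2 in Hy.
  assert (E : zq y * PI ^ 2 = (PI - y) * (PI + y)) by (unfold zq; field; lra).
  assert (Hpi : 2 * PI <= PI ^ 2) by nra.
  destruct Hx0 as [-> | ->];
    [rewrite Rabs_minus_sym, Rabs_right by lra | rewrite Rabs_right by lra];
    apply (Rmult_le_reg_r (PI ^ 2)); nra.
Qed.

Lemma INR_mul_pow_pred (n : nat) (a : R) : a <> 0 ->
  INR n * a ^ Nat.pred n = INR n * a ^ n / a.
Proof. intros Ha; destruct n; simpl; field; exact Ha. Qed.

Lemma is_derive_z1_deriv_in (k : nat) (x : R) : (k <= 5)%nat -> Rabs x < PI ->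
  is_derive (z1_deriv_in k) x (z1_deriv_in (S k) x).
Proof.
  intros Hk Hx; pose proof (zq_pos x Hx) as Hq; pose proof PI_RGT_0.
  unfold z1_deriv_in, zq in *.
  auto_derive.
  - repeat split; try lra.
    + exists (zpoly_deriv k (x * / PI)); apply zpoly_is_derive.
    + apply Rmult_integral_contrapositive; split; apply pow_nonzero; lra.
  - rewrite (is_derive_unique _ _ _ (zpoly_is_derive k _)), zpoly_succ by exact Hk.
    change (x * / PI) with (x / PI).
    replace (1 + - (x / PI * (x / PI * 1))) with (1 - (x / PI) ^ 2) by ring.
    set (Q := 1 - (x / PI) ^ 2) in *.
    replace (1 + - (1 * / Q)) with (1 - 1 / Q) by (unfold Rdiv; ring).
    rewrite INR_mul_pow_pred by lra.
    replace (2 * S k)%nat with (k + (k + 0) + 2)%nat by lia.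
    rewrite (pow_add Q _ 2), !plus_INR; simpl INR.
    assert (0 < PI ^ k) by (apply pow_lt; lra).
    assert (0 < Q ^ (k + (k + 0))) by (apply pow_lt; lra).
    set (A := Q ^ (k + (k + 0))) in *.
    change (PI ^ S k) with (PI * PI ^ k).
    set (B := PI ^ k) in *.
    field; repeat split; lra.
Qed.

Lemma exp_ge_pow_div_fact (x : R) (n : nat) : 0 <= x ->
  x ^ n / INR (fact n) <= exp x.
Proof.
  intros Hx; eapply Rle_trans; [|apply (exp_ge_taylor x n Hx)].
  destruct n as [|n]; [right; reflexivity|].
  rewrite tech5.
  enough (0 <= sum_f_R0 (fun j => x ^ j / INR (fact j)) n) by lra.
  apply cond_pos_sum; intros j.
  apply Rdiv_le_0_compat; [apply pow_le; lra|apply INR_fact_lt_0].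
Qed.

Lemma exp_neg_inv_le (a : R) (n : nat) : 0 < a ->
  exp (- / a) <= INR (fact n) * a ^ n.
Proof.
  intros Ha; rewrite exp_Ropp.
  pose proof (exp_ge_pow_div_fact (/ a) n ltac:(left; apply Rinv_0_lt_compat, Ha)) as Hn.
  assert (Hpos : 0 < / a ^ n / INR (fact n)).
  { apply Rdiv_lt_0_compat; [apply Rinv_0_lt_compat, pow_lt, Ha|apply INR_fact_lt_0]. }
  rewrite pow_inv in Hn.
  apply Rinv_le_contravar in Hn; [|exact Hpos].
  eapply Rle_trans; [exact Hn|right; field].
  split; [apply pow_nonzero; lra|apply INR_fact_neq_0].
Qed.

Lemma z1_deriv_in_quadratic_bound (k : nat) : exists C : R, 0 <= C /\
  forall y : R, Rabs y < PI -> Rabs (z1_deriv_in k y) <= C * zq y ^ 2.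
Proof.
  exists (2 * exp 1 * INR (fact (2 * k + 2)) * 300000); split.
  { pose proof (exp_pos 1); pose proof (INR_fact_lt_0 (2 * k + 2)); nra. }
  intros y Hy.
  pose proof (zq_pos y Hy) as Hq; pose proof PI2_3_2.
  assert (Hu : -1 <= y / PI <= 1).
  { apply Rabs_def2 in Hy; split;
      [apply (Rmult_le_reg_r PI)|apply (Rmult_le_reg_r PI)]; try lra;
      field_simplify; lra. }
  pose proof (zpoly_bound k _ Hu) as HP.
  pose proof (exp_neg_inv_le (zq y) (2 * k + 2) Hq) as HE.
  assert (HPk : 1 <= PI ^ k) by (rewrite <- (pow1 k); apply pow_incr; lra).
  unfold z1_deriv_in; set (Q := zq y) in *.
  assert (HA : 0 < Q ^ (2 * k)) by (apply pow_lt; lra).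
  rewrite pow_add in HE.
  replace (1 - 1 / Q) with (1 + - / Q) by (unfold Rdiv; ring).
  rewrite exp_plus.
  set (F := INR (fact (2 * k + 2))) in *; set (A := Q ^ (2 * k)) in *.
  set (p := zpoly k (y / PI)) in *.
  assert (HEp : exp (- / Q) * Rabs p <= F * (A * Q ^ 2) * 300000).
  { apply Rmult_le_compat; [left; apply exp_pos|apply Rabs_pos|exact HE|exact HP]. }
  assert (0 < F * (A * Q ^ 2)).
  { apply Rmult_lt_0_compat; [apply INR_fact_lt_0|].
    apply Rmult_lt_0_compat; [exact HA|apply pow_lt, Hq]. }
  pose proof (exp_pos 1).
  unfold Rdiv; rewrite !Rabs_mult, Rabs_inv, (Rabs_right 2), (Rabs_right (exp 1)),
    (Rabs_right (exp (- / Q))),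
    (Rabs_right (PI ^ k * A)) by (apply Rle_ge; try apply Rlt_le, exp_pos; nra).
  apply (Rmult_le_reg_r (PI ^ k * A)); [nra|].
  replace (2 * (exp 1 * exp (- / Q)) * Rabs p * / (PI ^ k * A) * (PI ^ k * A))
    with (2 * exp 1 * (exp (- / Q) * Rabs p)) by (field; nra).
  replace (2 * exp 1 * F * 300000 * Q ^ 2 * (PI ^ k * A))
    with (2 * exp 1 * (F * (A * Q ^ 2) * 300000 * PI ^ k)) by ring.
  apply Rmult_le_compat_l; nra.
Qed.

Lemma is_derive_0_of_quadratic_bound (f : R -> R) (x0 C : R) :
  (forall y : R, Rabs (f y - f x0) <= C * (y - x0) ^ 2) -> is_derive f x0 0.
Proof.
  intros Hf; apply is_derive_Reals; intros e He.
  assert (HC : 0 <= C).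
  { specialize (Hf (x0 + 1)); pose proof (Rabs_pos (f (x0 + 1) - f x0)).
    replace ((x0 + 1 - x0) ^ 2) with 1 in Hf by ring; lra. }
  assert (Hd : 0 < e / (C + 1)) by (apply Rdiv_lt_0_compat; lra).
  exists (mkposreal _ Hd); intros h Hh0 Hh; simpl in Hh.
  specialize (Hf (x0 + h)); replace (x0 + h - x0) with h in Hf by ring.
  assert (0 < Rabs h) by (apply Rabs_pos_lt, Hh0).
  rewrite Rminus_0_r; unfold Rdiv; rewrite Rabs_mult, Rabs_inv.
  apply (Rmult_lt_reg_r (Rabs h)); [lra|].
  rewrite Rmult_assoc, Rinv_l, Rmult_1_r by lra.
  rewrite <- pow2_abs in Hf.
  unfold Rdiv in Hh.
  assert (Hsmall : Rabs h * (C + 1) < e).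
  { apply (Rmult_lt_reg_r (/ (C + 1))); [apply Rinv_0_lt_compat; lra|].
    rewrite Rmult_assoc, Rinv_r, Rmult_1_r by lra; exact Hh. }
  nra.
Qed.

Definition zcore (k : nat) (x : R) : R :=
  if Rlt_dec (Rabs x) PI then z1_deriv_in k x else 0.

Lemma locally_Rabs_lt (x r : R) : Rabs x < r -> locally x (fun t => Rabs t < r).
Proof. intros Hx; apply (continuous_Rabs x (fun s => s < r)), open_lt, Hx. Qed.

Lemma locally_Rabs_gt (x r : R) : r < Rabs x -> locally x (fun t => r < Rabs t).
Proof. intros Hx; apply (continuous_Rabs x (fun s => r < s)), open_gt, Hx. Qed.

Lemma is_derive_zcore_boundary (k : nat) (x0 : R) : x0 = PI \/ x0 = - PI ->
  is_derive (zcore k) x0 0.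
Proof.
  intros Hx0.
  assert (Hz : zcore k x0 = 0).
  { unfold zcore; destruct (Rlt_dec (Rabs x0) PI) as [H|]; [|reflexivity].
    exfalso; destruct Hx0 as [-> | ->];
      rewrite ?Rabs_Ropp, Rabs_right in H; pose proof PI_RGT_0; lra. }
  destruct (z1_deriv_in_quadratic_bound k) as [C [HC0 HC]].
  apply (is_derive_0_of_quadratic_bound _ _ C); intros y.
  rewrite Hz, Rminus_0_r; unfold zcore.
  destruct (Rlt_dec (Rabs y) PI) as [Hy|Hy].
  - eapply Rle_trans; [apply HC, Hy|].
    apply Rmult_le_compat_l; [exact HC0|].
    rewrite <- (pow2_abs (y - x0)); apply pow_incr.
    split; [left; apply zq_pos, Hy|apply zq_le_dist; assumption].
  - rewrite Rabs_R0; apply Rmult_le_pos; [exact HC0|apply pow2_ge_0].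
Qed.

Lemma is_derive_zcore (k : nat) (x : R) : (k <= 5)%nat ->
  is_derive (zcore k) x (zcore (S k) x).
Proof.
  intros Hk; pose proof PI_RGT_0.
  destruct (Rtotal_order (Rabs x) PI) as [Hx|[Hx|Hx]].
  - apply (is_derive_ext_loc (z1_deriv_in k)).
    + apply (filter_imp (fun t => Rabs t < PI)); [|apply locally_Rabs_lt, Hx].
      intros t Ht; unfold zcore; destruct (Rlt_dec (Rabs t) PI); tauto.
    + unfold zcore; destruct (Rlt_dec (Rabs x) PI); [|tauto].
      apply is_derive_z1_deriv_in; assumption.
  - unfold zcore at 2; destruct (Rlt_dec (Rabs x) PI); [lra|].
    apply is_derive_zcore_boundary.
    destruct (Rcase_abs x); [rewrite Rabs_left in Hx|rewrite Rabs_right in Hx]; lra.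
  - apply (is_derive_ext_loc (fun _ => 0)).
    + apply (filter_imp (fun t => PI < Rabs t)); [|apply locally_Rabs_gt, Hx].
      intros t Ht; unfold zcore; destruct (Rlt_dec (Rabs t) PI); lra.
    + unfold zcore; destruct (Rlt_dec (Rabs x) PI); [lra|].
      exact (is_derive_const 0 x).
Qed.

Lemma is_derive_zcore_sub (k : nat) (c x : R) : (k <= 5)%nat ->
  is_derive (fun t => zcore k t - c) x (zcore (S k) x).
Proof.
  intros Hk; apply is_derive_Reals.
  rewrite <- (Rminus_0_r (zcore (S k) x)).
  exact (derivable_pt_lim_minus (zcore k) (fun _ => c) x _ _
    (proj1 (is_derive_Reals _ _ _) (is_derive_zcore k x Hk))
    (derivable_pt_lim_const c x)).
Qed.

Lemma Derive_n_z1 (k : nat) (x : R) : (k <= 6)%nat ->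
  Derive_n z1 k x = zcore k x - match k with O => 1 | S _ => 0 end.
Proof.
  revert x; induction k as [|k IHk]; intros x Hk.
  - unfold z1, zcore, z1_deriv_in, zq; simpl.
    destruct (Rlt_dec (Rabs x) PI); field.
  - simpl Derive_n; rewrite Rminus_0_r.
    rewrite (Derive_ext _ (fun t => zcore k t - match k with O => 1 | S _ => 0 end))
      by (intros; apply IHk; lia).
    apply is_derive_unique, is_derive_zcore_sub; lia.
Qed.

Lemma is_derive_Derive_n_z1 (k : nat) (x : R) : (k <= 5)%nat ->
  is_derive (Derive_n z1 k) x (Derive_n z1 (S k) x).
Proof.
  intros Hk; rewrite Derive_n_z1, Rminus_0_r by lia.
  apply (is_derive_ext (fun t => zcore k t - match k with O => 1 | S _ => 0 end)).
  - intros t; symmetry; apply Derive_n_z1; lia.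
  - apply is_derive_zcore_sub, Hk.
Qed.

Lemma zq_opp (x : R) : zq (- x) = zq x.
Proof. unfold zq, Rdiv; ring. Qed.

Lemma z1_deriv_in_opp (k : nat) (x : R) :
  z1_deriv_in k (- x) = (-1) ^ k * z1_deriv_in k x.
Proof.
  unfold z1_deriv_in; rewrite zq_opp.
  replace (- x / PI) with (- (x / PI)) by (unfold Rdiv; ring).
  rewrite zpoly_opp; unfold Rdiv; ring.
Qed.

Lemma zcore_opp (k : nat) (x : R) : zcore k (- x) = (-1) ^ k * zcore k x.
Proof.
  unfold zcore; rewrite Rabs_Ropp.
  destruct (Rlt_dec (Rabs x) PI); [apply z1_deriv_in_opp|ring].
Qed.

Lemma z1_deriv_in_pos_left (k : nat) (x : R) : (k <= 6)%nat ->
  - PI < x <= - PI + eps -> 0 < z1_deriv_in k x.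
Proof.
  intros Hk Hx; pose proof PI2_3_2; unfold eps in Hx.
  assert (Hq : 0 < zq x) by (apply zq_pos, Rabs_def1; lra).
  assert (Hv : 0 < (x + PI) / PI <= / 384).
  { split; [apply Rdiv_lt_0_compat; lra|].
    apply (Rmult_le_reg_r PI); [lra|]; field_simplify; lra. }
  pose proof (zpoly_shifted_pos k _ Hk Hv) as Hp.
  rewrite <- zpoly_shift in Hp.
  replace ((x + PI) / PI - 1) with (x / PI) in Hp by (field; lra).
  unfold z1_deriv_in; apply Rdiv_lt_0_compat.
  - pose proof (exp_pos (1 - 1 / zq x)); nra.
  - apply Rmult_lt_0_compat; apply pow_lt; lra.
Qed.

Lemma zcore_nonneg_left (k : nat) (x : R) : (k <= 6)%nat ->
  - PI <= x <= - PI + eps -> 0 <= zcore k x.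
Proof.
  intros Hk Hx; unfold zcore.
  destruct (Rlt_dec (Rabs x) PI) as [Hlt|]; [|lra].
  destruct (Req_dec x (- PI)) as [->|Hne].
  - rewrite Rabs_Ropp, Rabs_right in Hlt; pose proof PI_RGT_0; lra.
  - left; apply z1_deriv_in_pos_left; [exact Hk|lra].
Qed.

Lemma zcore_sign_right (k : nat) (x : R) : (k <= 6)%nat ->
  PI - eps <= x <= PI -> 0 <= (-1) ^ k * zcore k x.
Proof.
  intros Hk Hx; rewrite <- zcore_opp; apply zcore_nonneg_left; [exact Hk|lra].
Qed.

Lemma MVT_in_interval (f f' : R -> R) (a b y z : R) :
  (forall x, a <= x <= b -> is_derive f x (f' x)) -> a <= y <= z -> z <= b ->
  exists c, a <= c <= b /\ f z - f y = f' c * (z - y).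
Proof.
  intros Hf Hyz Hzb.
  destruct (Req_dec y z) as [<-|Hne]; [exists y; split; [lra|ring]|].
  destruct (MVT_cor3 f f' y z) as [c [Hc1 [Hc2 E]]]; [lra| |].
  - intros c Hc1 Hc2; apply is_derive_Reals, Hf; lra.
  - exists c; split; [lra|rewrite E; ring].
Qed.

Lemma between_of_derive_sign (f f' : R -> R) (a b : R) :
  (forall x, a <= x <= b -> is_derive f x (f' x)) ->
  (forall x, a <= x <= b -> 0 <= f' x) \/ (forall x, a <= x <= b -> f' x <= 0) ->
  forall x, a <= x <= b -> between (f a) (f b) (f x).
Proof.
  intros Hf Hsign x Hx.
  destruct (MVT_in_interval f f' a b a x Hf) as [c [Hc Ec]]; [lra|lra|].
  destruct (MVT_in_interval f f' a b x b Hf) as [d [Hd Ed]]; [lra|lra|].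
  unfold between, Rmin, Rmax; destruct Hsign as [Hs|Hs];
    pose proof (Hs c Hc); pose proof (Hs d Hd);
    destruct (Rle_dec (f a) (f b)); nra.
Qed.

Lemma Derive_n_z1_between_left (k : nat) (x : R) : (k <= 5)%nat ->
  - PI <= x <= - PI + eps ->
  between (Derive_n z1 k (- PI)) (Derive_n z1 k (- PI + eps)) (Derive_n z1 k x).
Proof.
  intros Hk; apply (between_of_derive_sign _ (Derive_n z1 (S k))).
  - intros y _; apply is_derive_Derive_n_z1, Hk.
  - left; intros y Hy; rewrite Derive_n_z1, Rminus_0_r by lia.
    apply zcore_nonneg_left; [lia|exact Hy].
Qed.

Lemma neg1_pow_cases (k : nat) : (-1) ^ k = 1 \/ (-1) ^ k = -1.
Proof.
  induction k as [|k [E|E]]; simpl; [left|right|left]; rewrite ?E; ring.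
Qed.

Lemma Derive_n_z1_between_right (k : nat) (x : R) : (k <= 5)%nat ->
  PI - eps <= x <= PI ->
  between (Derive_n z1 k (PI - eps)) (Derive_n z1 k PI) (Derive_n z1 k x).
Proof.
  intros Hk; apply (between_of_derive_sign _ (Derive_n z1 (S k))).
  - intros y _; apply is_derive_Derive_n_z1, Hk.
  - destruct (neg1_pow_cases (S k)) as [E|E]; [left|right]; intros y Hy;
      pose proof (zcore_sign_right (S k) y ltac:(lia) Hy) as Hs;
      rewrite E in Hs; rewrite Derive_n_z1, Rminus_0_r by lia; lra.
Qed.

Theorem corollary2 :
  forall k : nat, (k <= 5)%nat ->
    (forall x : R, -PI <= x <= -PI + eps ->
       between (Derive_n z1 k (-PI)) (Derive_n z1 k (-PI + eps)) (Derive_n z1 k x)) /\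
    (forall x : R, PI - eps <= x <= PI ->
       between (Derive_n z1 k (PI - eps)) (Derive_n z1 k PI) (Derive_n z1 k x)).
Proof.
  intros k Hk; split; intros x Hx;
    [apply Derive_n_z1_between_left | apply Derive_n_z1_between_right]; assumption.
Qed.
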